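(* Let $n\geq 3$. The center of the ramified symmetric monoid $\mathcal{R}(\mathfrak{S}_n)$ is $Z(\mathcal{R}(\mathfrak{S}_n))=\{1,\;e_1e_2\cdots e_{n-1}\}$, i.e. the submonoid generated by the single idempotent $e_1e_2\cdots e_{n-1}$.
   Context: For $n\ge1$ let $\mathfrak{C}_n$ be the partition monoid: its elements are set partitions of $[2n]=\{1,\dots,2n\}$ (points $1,\dots,n$ on top, $n+1,\dots,2n$ on bottom), and the product $I*J$ is obtained by identifying the bottom point $n+i$ of $I$ with the top point $i$ of $J$, joining blocks transitively, and then deleting the identified middle points (formally, with $X=\{x_1,\dots,x_n\}$ disjoint from $[2n]$, $I*J=(I_X\vee J^X)\cap[2n]$, where $I_X$ replaces $n+i$ by $x_i$ in $I$, $J^X$ replaces $i$ by $x_i$ in $J$, and $\vee$ is the join of set partitions). For set partitions, $I\preceq J$ means every block of $J$ is a union of blocks of $I$. The symmetric group $\mathfrak{S}_n$ is the submonoid of $\mathfrak{C}_n$ of partitions whose blocks are of the form $\{i,n+j\}$; $s_i$ denotes the simple transposition and $1$ the identity $\{\{i,n+i\}\}$. For a submonoid $M\subseteq\mathfrak{C}_n$, the ramified monoid $\mathcal{R}(M)$ is the set of pairs $(I,J)$ of set partitions of $[2n]$ with $I\in M$ and $I\preceq J$, with product $(I,J)*(H,K)=(I*H,J*K)$. The group $\mathfrak{S}_n$ embeds via $w\mapsto(w,w)$. For $i\in[n-1]$, $e_i=(1,b_i)$ where $b_i$ is the set partition obtained from $1$ by merging the blocks $\{i,n+i\}$ and $\{i+1,n+i+1\}$.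 Thus $e_1\cdots e_{n-1}=(1,\{[2n]\})$. *)

From mathcomp Require Import all_boot.
Set Implicit Arguments. Unset Strict Implicit. Unset Printing Implicit Defensive.

(* Points of [2n]: inl i = top point i+1, inr i = bottom point n+i+1 (i : 'I_n). *)
Notation pt n := ('I_n + 'I_n)%type.
(* Points of [2n] ⊔ X, X = {x_1..x_n} encoded as the right summand. *)
Notation gpt n := (pt n + 'I_n)%type.

Definition setpart (n : nat) := {set {set pt n}}.
Definition is_setpart n (P : setpart n) : Prop := partition P [set: pt n].

Definition preceq n (I J : setpart n) : Prop :=
  forall B, B \in J -> exists S : {set {set pt n}}, S \subset I /\ B = cover S.

Definition same n (P : setpart n) (x y : pt n) : bool :=
  [exists B in P, (x \in B) && (y \in B)].

(* I_X : bottom point n+i of I is renamed x_i. *)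
Definition mapI n (p : pt n) : gpt n :=
  match p with inl i => inl (inl i) | inr i => inr i end.
(* J^X : top point i of J is renamed x_i. *)
Definition mapJ n (p : pt n) : gpt n :=
  match p with inl i => inr i | inr i => inl (inr i) end.

(* Union of the block relations of I_X and J^X on [2n] ⊔ X; its
   reflexive-transitive closure (connect) is the join I_X ∨ J^X. *)
Definition join_edge n (I J : setpart n) : rel (gpt n) := fun u v =>
  [exists p, exists q, [&& same I p q, mapI p == u & mapI q == v]] ||
  [exists p, exists q, [&& same J p q, mapJ p == u & mapJ q == v]].

(* I * J = (I_X ∨ J^X) ∩ [2n]. *)
Definition pmul n (I J : setpart n) : setpart n :=
  equivalence_partition
    (fun x y : pt n => connect (join_edge I J) (inl x) (inl y)) [set: pt n].

Definition pone n : setpart n := [set [set (inl i : pt n); inr i] | i : 'I_n].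

Definition inS n (I : setpart n) : Prop :=
  is_setpart I /\ forall B, B \in I -> exists i j : 'I_n, B = [set inl i; inr j].

Definition rmon n := (setpart n * setpart n)%type.
Definition inR n (x : rmon n) : Prop :=
  inS x.1 /\ is_setpart x.2 /\ preceq x.1 x.2.
Definition rmul n (x y : rmon n) : rmon n := (pmul x.1 y.1, pmul x.2 y.2).
Definition rone n : rmon n := (pone n, pone n).

(* b_i (i in [n-1], 1-based): merge blocks {i,n+i} and {i+1,n+i+1} of 1;
   in 0-based indices these are the columns i-1 and i. *)
Definition col_in n (k : nat) (x : pt n) : bool :=
  match x with inl j | inr j => (val j == k.-1) || (val j == k) end.
Definition bpart n (k : nat) : setpart n :=
  [set [set (inl j : pt n); inr j] | j : 'I_n & ~~ col_in k (inl j)]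
  :|: [set [set x : pt n | col_in k x]].
Definition e n (k : nat) : rmon n := (pone n, bpart n k).

Definition eprod n : rmon n := foldr (@rmul n) (rone n) [seq e n k | k <- iota 1 n.-1].

(* Commuting with an embedded permutation (w, w) means being invariant under relabelling
   both rows by w.  For a central (I, J) with I in S_n, the block of a top point i meets the
   bottom row in a single point s(i), and s commutes with every transposition, so s = 1 as
   soon as n >= 3.  Then 1 ⪯ J, so J is described by an S_n-invariant equivalence relation on
   the columns, which is either discrete (J = 1) or total (J = {[2n]}, and
   e_1 ... e_{n-1} = (1, {[2n]})).  Conversely (1, {[2n]}) absorbs every element of R(S_n) on
   both sides, since every block of a J ⪰ I in S_n meets both rows. *)

From mathcomp Require Import all_boot all_fingroup.
Set Implicit Arguments. Unset Strict Implicit. Unset Printing Implicit Defensive.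

Section PermutationInvariantRelations.

Variables (T : finType) (R : rel T).
Hypothesis R_perm : forall (s : {perm T}) x y, R (s x) (s y) = R x y.

Lemma perm_invariant_rel_move x y z : x != y -> z != x -> R x y -> R x z.
Proof.
move=> nxy nzx Rxy; have := R_perm (tperm y z) x y.
by rewrite tpermL tpermD ?Rxy // eq_sym.
Qed.

Lemma perm_invariant_rel_discrete_or_full :
  reflexive R -> (forall x y, R x y -> x = y) \/ (forall x y, R x y).
Proof.
move=> Rxx; have [/existsP[x /existsP[y /andP[nxy Rxy]]]|/existsPn noR] :=
  boolP [exists x, exists y, (x != y) && R x y]; last first.
  left=> x y Rxy; apply/eqP; move/existsPn: (noR x) => /(_ y).
  by rewrite Rxy andbT negbK.
have Rx z : R x z.
  by have [->|nzx] := eqVneq z x; [apply: Rxx | apply: perm_invariant_rel_move Rxy].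
by right=> u v; rewrite -(R_perm (tperm x u)) tpermR Rx.
Qed.

Lemma perm_invariant_functional_rel_diag :
  2 < #|T| -> (forall x y z, R x y -> R x z -> y = z) -> forall x y, R x y -> x = y.
Proof.
move=> T3 Rfun x y Rxy; have [//|nxy] := eqVneq x y.
have /subsetPn[z _] : ~~ ([set: T] \subset [set x; y]).
  by apply: contraTN T3 => /subset_leq_card; rewrite cardsT cards2 nxy -leqNgt.
rewrite !inE negb_or => /andP[zx zy].
have Rxz : R x z := perm_invariant_rel_move nxy zx Rxy.
by move: zy; rewrite -(Rfun _ _ _ Rxy Rxz) eqxx.
Qed.

End PermutationInvariantRelations.

Section PartitionMonoid.

Variable n : nat.
Implicit Types (P Q I J : setpart n) (x y z : pt n) (s : {perm 'I_n}) (i j : 'I_n).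

Lemma setpart_cover P x : is_setpart P -> x \in cover P.
Proof. by move=> /and3P[/eqP-> _ _]; rewrite inE. Qed.

Lemma sameE P x y : is_setpart P -> same P x y = (y \in pblock P x).
Proof.
move=> hP; have [_ tiP _] := and3P hP.
apply/existsP/idP => [[B /and3P[BP xB yB]]|yPx]; first by rewrite (def_pblock tiP BP xB).
by exists (pblock P x); rewrite pblock_mem ?setpart_cover // yPx mem_pblock setpart_cover.
Qed.

Lemma same_refl P x : is_setpart P -> same P x x.
Proof. by move=> hP; rewrite sameE // mem_pblock setpart_cover. Qed.

Lemma same_sym P x y : same P x y = same P y x.
Proof. by apply/existsP/existsP => -[B /and3P[BP xB yB]]; exists B; rewrite BP xB yB. Qed.

Lemma same_trans P x y z : is_setpart P -> same P x y -> same P y z -> same P x z.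
Proof.
move=> hP; have [_ tiP _] := and3P hP.
by rewrite !sameE // => yPx zPy; rewrite -(same_pblock tiP yPx).
Qed.

Lemma setpart_ext P Q : is_setpart P -> is_setpart Q -> same P =2 same Q -> P = Q.
Proof.
move=> hP hQ PQ.
rewrite -(equivalence_partition_pblock hP) -(equivalence_partition_pblock hQ).
by apply: eq_imset => x; apply/setP => y; rewrite !inE -!sameE // PQ.
Qed.

Lemma join_edge_sym I J : symmetric (join_edge I J).
Proof.
move=> u v; congr orb; apply/existsP/existsP => -[p /existsP[q /and3P[spq /eqP<- /eqP<-]]];
  by exists q; apply/existsP; exists p; rewrite same_sym spq !eqxx.
Qed.

Lemma connect_join_sym I J : connect_sym (join_edge I J).
Proof. exact/sym_connect_sym/join_edge_sym. Qed.

Lemma connect_join_equiv I J :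
  equivalence_rel (fun x y : pt n => connect (join_edge I J) (inl x) (inl y)).
Proof.
move=> x y z; split=> [|cxy]; first exact: connect0.
apply/idP/idP => [cxz|]; last exact: connect_trans.
by apply: connect_trans cxz; rewrite connect_join_sym.
Qed.

Lemma pmul_setpart I J : is_setpart (pmul I J).
Proof. by apply: equivalence_partitionP => x y z _ _ _; apply: connect_join_equiv. Qed.

Lemma same_pmul I J x y :
  same (pmul I J) x y = connect (join_edge I J) (inl x) (inl y).
Proof.
rewrite sameE; last exact: pmul_setpart.
apply: (pblock_equivalence_partition (D := setT)); rewrite ?inE //.
by move=> a b c _ _ _; apply: connect_join_equiv.
Qed.

Lemma join_edgeI I J p q : same I p q -> join_edge I J (mapI p) (mapI q).
Proof.
move=> spq; apply/orP; left.
by apply/existsP; exists p; apply/existsP; exists q; rewrite spq !eqxx.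
Qed.

Lemma join_edgeJ I J p q : same J p q -> join_edge I J (mapJ p) (mapJ q).
Proof.
move=> spq; apply/orP; right.
by apply/existsP; exists p; apply/existsP; exists q; rewrite spq !eqxx.
Qed.

Lemma connect_join_same I J P (h : gpt n -> pt n) u v : is_setpart P ->
    (forall p q, same I p q -> same P (h (mapI p)) (h (mapI q))) ->
    (forall p q, same J p q -> same P (h (mapJ p)) (h (mapJ q))) ->
  connect (join_edge I J) u v -> same P (h u) (h v).
Proof.
move=> hP hI hJ /connectP[s + ->]; elim: s u => [|w s IHs] u /=; first by rewrite same_refl.
case/andP=> /orP[] /existsP[p /existsP[q /and3P[spq /eqP<- /eqP<-]]] /IHs;
  by apply: (same_trans hP); first [exact: hI spq | exact: hJ spq].
Qed.

Definition permp (s : {perm 'I_n}) : setpart n := [set [set inl i; inr (s i)] | i : 'I_n].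

Definition strand (s : {perm 'I_n}) x : 'I_n :=
  match x with inl i => i | inr j => (s^-1)%g j end.

Definition relabel (f g : 'I_n -> 'I_n) x : pt n :=
  match x with inl i => inl (f i) | inr j => inr (g j) end.

Lemma permp_blockE s i : [set inl i; inr (s i)] = [set x | strand s x == i].
Proof.
apply/setP => -[a|b]; rewrite !inE; first exact: orbF.
by rewrite -[LHS]/(b == s i) /=; apply/eqP/eqP => [->|<-]; rewrite ?permK ?permKV.
Qed.

Lemma permp_setpart s : is_setpart (permp s).
Proof.
apply/and3P; split.
- apply/eqP/setP => x; rewrite inE; apply/bigcupP.
  exists [set inl (strand s x); inr (s (strand s x))]; first exact: imset_f.
  by rewrite permp_blockE inE.
- apply/trivIsetP => _ _ /imsetP[i _ ->] /imsetP[j _ ->] nij.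
  rewrite !permp_blockE; apply/pred0P => x /=; rewrite !inE.
  by apply: contraNF nij => /andP[/eqP<- /eqP<-].
- apply/imsetP => -[i _ /setP/(_ (inl i))].
  by rewrite !inE eqxx.
Qed.

Lemma same_permp s x y : same (permp s) x y = (strand s x == strand s y).
Proof.
apply/existsP/eqP => [[_ /and3P[/imsetP[i _ ->]]]|exy].
  by rewrite permp_blockE !inE => /eqP-> /eqP->.
exists [set inl (strand s x); inr (s (strand s x))]; apply/and3P; split.
- exact: imset_f.
- by rewrite permp_blockE inE.
- by rewrite permp_blockE inE exy.
Qed.

Lemma same_pmul_permp_l s P x y : is_setpart P ->
  same (pmul (permp s) P) x y = same P (relabel s id x) (relabel s id y).
Proof.
move=> hP; rewrite same_pmul.
(* [h] sends each point of the glued diagram to the point of [P] it is attached to. *)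
pose h (u : gpt n) : pt n :=
  match u with inl (inl i) => inl (s i) | inl (inr j) => inr j | inr k => inl k end.
have hx z : h (inl z) = relabel s id z by case: z.
have hI p : h (mapI p) = inl (s (strand s p)) by case: p => //= j; rewrite permKV.
have hJ p : h (mapJ p) = p by case: p.
have to_P u : connect (join_edge (permp s) P) u (mapJ (h u)).
  case: u => [[i|j]|k]; try exact: connect0.
  apply: connect1; apply: (@join_edgeI _ _ (inl i) (inr (s i))).
  by rewrite same_permp /= permK.
apply/idP/idP => [|sxy].
  rewrite -!hx; apply: connect_join_same => // p q; rewrite ?hI ?hJ //.
  by rewrite same_permp => /eqP->; apply: same_refl.
apply: connect_trans (to_P _) _; rewrite connect_join_sym.
apply: connect_trans (to_P _) _; apply/connect1/join_edgeJ.
by rewrite !hx same_sym.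
Qed.

Lemma same_pmul_permp_r s P x y : is_setpart P ->
  same (pmul P (permp s)) x y = same P (relabel id (s^-1)%g x) (relabel id (s^-1)%g y).
Proof.
move=> hP; rewrite same_pmul.
pose h (u : gpt n) : pt n :=
  match u with inl (inl i) => inl i | inl (inr j) => inr ((s^-1)%g j) | inr k => inr k end.
have hx z : h (inl z) = relabel id (s^-1)%g z by case: z.
have hI p : h (mapI p) = p by case: p.
have hJ p : h (mapJ p) = inr (strand s p) by case: p.
have to_P u : connect (join_edge P (permp s)) u (mapI (h u)).
  case: u => [[i|j]|k]; try exact: connect0.
  apply: connect1; apply: (@join_edgeJ _ _ (inr j) (inl ((s^-1)%g j))).
  by rewrite same_permp.
apply/idP/idP => [|sxy].
  rewrite -!hx; apply: connect_join_same => // p q; rewrite ?hI ?hJ //.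
  by rewrite same_permp => /eqP->; apply: same_refl.
apply: connect_trans (to_P _) _; rewrite connect_join_sym.
apply: connect_trans (to_P _) _; apply/connect1/join_edgeI.
by rewrite !hx same_sym.
Qed.

Definition relabel_invariant P :=
  forall s x y, same P (relabel s s x) (relabel s s y) = same P x y.

Lemma pmul_permp_comm_relabel s P : is_setpart P ->
    pmul (permp s) P = pmul P (permp s) ->
  forall x y, same P (relabel s s x) (relabel s s y) = same P x y.
Proof.
move=> hP psP x y.
have K z : relabel id (s^-1)%g (relabel id s z) = z by case: z => //= j; rewrite permK.
have := same_pmul_permp_l s (relabel id s x) (relabel id s y) hP.
by rewrite psP same_pmul_permp_r // !K; case: x; case: y.
Qed.

Lemma pone_permp : pone n = permp 1.
Proof. by apply: eq_imset => i; rewrite perm1. Qed.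

Lemma pone_setpart : is_setpart (pone n).
Proof. by rewrite pone_permp; apply: permp_setpart. Qed.

Lemma same_pone_top i j : same (pone n) (inl i) (inl j) = (i == j).
Proof. by rewrite pone_permp same_permp. Qed.

Lemma pone_pmul P : is_setpart P -> pmul (pone n) P = P.
Proof.
move=> hP; apply: setpart_ext => //; first exact: pmul_setpart.
move=> x y; rewrite pone_permp same_pmul_permp_l //.
by case: x; case: y => * /=; rewrite ?perm1.
Qed.

Lemma pmul_pone P : is_setpart P -> pmul P (pone n) = P.
Proof.
move=> hP; apply: setpart_ext => //; first exact: pmul_setpart.
move=> x y; rewrite pone_permp same_pmul_permp_r //.
by case: x; case: y => * /=; rewrite ?invg1 ?perm1.
Qed.

Definition pfull : setpart n := [set [set: pt n]].

Lemma pfull_setpart : 0 < n -> is_setpart pfull.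
Proof.
move=> n_gt0; apply/and3P; split; first by rewrite cover1.
  by apply/trivIsetP => A B /set1P-> /set1P->; rewrite eqxx.
by rewrite inE eq_sym; apply/set0Pn; exists (inl (Ordinal n_gt0)).
Qed.

Lemma same_pfull x y : same pfull x y.
Proof. by apply/existsP; exists [set: pt n]; rewrite !inE eqxx. Qed.

Lemma setpart_full P : 0 < n -> is_setpart P -> (forall x y, same P x y) -> P = pfull.
Proof.
move=> n_gt0 hP Pxy; apply: setpart_ext => //; first exact: pfull_setpart.
by move=> x y; rewrite Pxy same_pfull.
Qed.

Definition balanced P :=
  forall x, (exists i, same P x (inl i)) /\ (exists j, same P x (inr j)).

Lemma pmul_pfull_l P : 0 < n -> is_setpart P -> balanced P -> pmul pfull P = pfull.
Proof.
move=> n_gt0 hP bP; apply: setpart_full => // [|x y]; first exact: pmul_setpart.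
have to_top u : exists p, connect (join_edge pfull P) u (mapI p).
  case: u => [[i|j]|k].
  - by exists (inl i); apply: connect0.
  - have [[i sji] _] := bP (inr j).
    by exists (inr i); apply: connect1; apply: (@join_edgeJ _ _ (inr j) (inl i)).
  - by exists (inr k); apply: connect0.
have [[p cxp] [q cyq]] := (to_top (inl x), to_top (inl y)).
rewrite same_pmul; apply: connect_trans cxp _; rewrite connect_join_sym.
by apply: connect_trans cyq _; apply/connect1/join_edgeI/same_pfull.
Qed.

Lemma pmul_pfull_r P : 0 < n -> is_setpart P -> balanced P -> pmul P pfull = pfull.
Proof.
move=> n_gt0 hP bP; apply: setpart_full => // [|x y]; first exact: pmul_setpart.
have to_bot u : exists p, connect (join_edge P pfull) u (mapJ p).
  case: u => [[i|j]|k].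
  - have [_ [j sij]] := bP (inl i).
    by exists (inl j); apply: connect1; apply: (@join_edgeI _ _ (inl i) (inr j)).
  - by exists (inr j); apply: connect0.
  - by exists (inl k); apply: connect0.
have [[p cxp] [q cyq]] := (to_bot (inl x), to_bot (inl y)).
rewrite same_pmul; apply: connect_trans cxp _; rewrite connect_join_sym.
by apply: connect_trans cyq _; apply/connect1/join_edgeJ/same_pfull.
Qed.

Lemma preceq_same I J x y : is_setpart I -> is_setpart J -> preceq I J ->
  same I x y -> same J x y.
Proof.
move=> hI hJ IJ /existsP[C /and3P[CI xC yC]].
have [_ tiI _] := and3P hI.
have [S [SI defB]] := IJ _ (pblock_mem (setpart_cover x hJ)).
have /bigcupP[C' C'S xC'] : x \in cover S by rewrite -defB mem_pblock setpart_cover.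
have eC' : C' = C.
  by rewrite -(def_pblock tiI CI xC) (def_pblock tiI (subsetP SI _ C'S) xC').
by rewrite sameE // defB; apply/bigcupP; exists C'; rewrite // eC'.
Qed.

Lemma inS_balanced I J : inS I -> is_setpart J -> preceq I J -> balanced J.
Proof.
move=> [hI blkI] hJ IJ x.
have [i [j defB]] := blkI _ (pblock_mem (setpart_cover x hI)).
have sI z : z \in pblock I x -> same J x z.
  by move=> zB; apply: (preceq_same hI hJ IJ); rewrite sameE.
by split; [exists i|exists j]; apply: sI; rewrite defB !inE eqxx ?orbT.
Qed.

(* [columnar P] means [pone n ⪯ P]. *)
Definition columnar P := forall i, same P (inl i) (inr i).

Definition col x : 'I_n := match x with inl i | inr i => i end.

Lemma columnar_same P x y : is_setpart P -> columnar P ->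
  same P x y = same P (inl (col x)) (inl (col y)).
Proof.
move=> hP cP; have sc z : same P z (inl (col z)).
  by case: z => i /=; rewrite ?same_refl // same_sym.
apply/idP/idP => sxy.
  by apply: (same_trans hP _ (sc y)); apply: (same_trans hP _ sxy); rewrite same_sym.
by apply: (same_trans hP (sc x)); apply: (same_trans hP sxy); rewrite same_sym.
Qed.

Lemma columnar_pone : columnar (pone n).
Proof. by move=> i; rewrite pone_permp same_permp /= invg1 perm1. Qed.

Lemma columnar_eq_pone P : is_setpart P -> columnar P ->
  (forall i j, same P (inl i) (inl j) -> i = j) -> P = pone n.
Proof.
move=> hP cP discrP; apply: setpart_ext => //; first exact: pone_setpart.
move=> x y; rewrite columnar_same // (columnar_same _ _ pone_setpart columnar_pone).
by rewrite same_pone_top; apply/idP/eqP => [/discrP|->] //; apply: same_refl.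
Qed.

Lemma columnar_pmul I J : columnar I -> columnar J -> columnar (pmul I J).
Proof.
move=> cI cJ i; rewrite same_pmul; apply: (@connect_trans _ _ (inr i)); apply: connect1.
  exact: (@join_edgeI _ _ (inl i) (inr i) (cI i)).
exact: (@join_edgeJ _ _ (inl i) (inr i) (cJ i)).
Qed.

Lemma same_pmul_top_l I J i j :
  same I (inl i) (inl j) -> same (pmul I J) (inl i) (inl j).
Proof.
by move=> sij; rewrite same_pmul; apply: connect1; apply: (@join_edgeI _ _ (inl i) (inl j)).
Qed.

Lemma same_pmul_top_r I J i j : columnar I ->
  same J (inl i) (inl j) -> same (pmul I J) (inl i) (inl j).
Proof.
move=> cI sij; rewrite same_pmul; apply: (@connect_trans _ _ (inr i)).
  by apply: connect1; apply: (@join_edgeI _ _ (inl i) (inr i) (cI i)).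
apply: (@connect_trans _ _ (inr j)); apply: connect1.
  exact: (@join_edgeJ _ _ (inl i) (inl j) sij).
by apply: (@join_edgeI _ _ (inr j) (inl j)); rewrite same_sym.
Qed.

Lemma columnar_bpart k : columnar (bpart n k).
Proof.
move=> i; apply/existsP; have [cki|ncki] := boolP (col_in k (inl i)).
  by exists [set x | col_in k x]; rewrite /= in cki; rewrite !inE /= eqxx orbT cki.
exists [set inl i; inr i]; rewrite !inE !eqxx orbT andbT /= andbT.
by apply/orP; left; apply/imsetP; exists i; rewrite // inE.
Qed.

Lemma same_bpart_adjacent k i j : val i = k.-1 -> val j = k ->
  same (bpart n k) (inl i) (inl j).
Proof.
move=> ik jk; apply/existsP; exists [set x | col_in k x].
by rewrite /bpart !inE /= ik jk !eqxx /= !orbT.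
Qed.

Lemma foldr_pmul_setpart (l : seq (setpart n)) : is_setpart (foldr (@pmul n) (pone n) l).
Proof. by case: l => [|P l]; [exact: pone_setpart|exact: pmul_setpart]. Qed.

Lemma columnar_foldr_pmul (l : seq (setpart n)) :
  (forall P, P \in l -> columnar P) -> columnar (foldr (@pmul n) (pone n) l).
Proof.
elim: l => [|P l IHl] cl /=; first exact: columnar_pone.
apply: columnar_pmul; first by apply: cl; rewrite mem_head.
by apply: IHl => Q Ql; apply: cl; rewrite inE Ql orbT.
Qed.

Lemma same_foldr_pmul_top (l : seq (setpart n)) P i j :
    (forall Q, Q \in l -> columnar Q) -> P \in l ->
  same P (inl i) (inl j) -> same (foldr (@pmul n) (pone n) l) (inl i) (inl j).
Proof.
elim: l => [|Q l IHl] //= cl; rewrite inE => /orP[/eqP<-|Pl] sij.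
  exact: same_pmul_top_l.
apply: same_pmul_top_r; first by apply: cl; rewrite mem_head.
by apply: IHl => // R Rl; apply: cl; rewrite inE Rl orbT.
Qed.

Lemma foldr_rmul (l : seq (rmon n)) :
  foldr (@rmul n) (rone n) l =
    (foldr (@pmul n) (pone n) (map fst l), foldr (@pmul n) (pone n) (map snd l)).
Proof. by elim: l => //= x l ->. Qed.

Lemma eprodE : 0 < n -> eprod n = (pone n, pfull).
Proof.
move=> n_gt0; rewrite /eprod foldr_rmul -!map_comp; congr pair.
  by elim: (iota 1 n.-1) => //= k l ->; rewrite pmul_pone //; exact: pone_setpart.
rewrite (eq_map (_ : snd \o e n =1 bpart n)) //.
set l := map _ _; set Q := foldr _ _ l.
have cl P : P \in l -> columnar P by case/mapP=> k _ ->; apply: columnar_bpart.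
have hQ : is_setpart Q := foldr_pmul_setpart l.
have Q0 i : same Q (inl (Ordinal n_gt0)) (inl i).
  case: i => i; elim: i => [|i IHi] lt_i_n.
    by rewrite (_ : Ordinal lt_i_n = Ordinal n_gt0) ?same_refl //; apply: val_inj.
  apply: (same_trans hQ (IHi (ltnW lt_i_n))).
  apply: (same_foldr_pmul_top (P := bpart n i.+1) cl); last exact: same_bpart_adjacent.
  by apply: map_f; rewrite mem_iota add1n prednK.
apply: setpart_full => // x y; rewrite columnar_same //; last exact: columnar_foldr_pmul.
by apply: (same_trans hQ _ (Q0 _)); rewrite same_sym.
Qed.

Lemma inS_same_bot I i j : inS I -> same I (inr i) (inr j) -> i = j.
Proof.
move=> [_ blkI] /existsP[B /and3P[BI iB jB]]; have [a [b defB]] := blkI _ BI.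
by move: iB jB; rewrite defB !inE /= => /eqP[->] /eqP[->].
Qed.

Lemma inS_same_top_bot I i : inS I -> exists j, same I (inl i) (inr j).
Proof.
move=> [hI blkI]; have [a [b defB]] := blkI _ (pblock_mem (setpart_cover (inl i) hI)).
by exists b; rewrite sameE // defB !inE eqxx orbT.
Qed.

Lemma inS_relabel_invariant_eq_pone I : 2 < n -> inS I -> relabel_invariant I -> I = pone n.
Proof.
move=> n3 sI invI; have hI := sI.1.
have cI : columnar I.
  move=> i; have [j sij] := inS_same_top_bot i sI.
  suff eij : i = j by rewrite {2}eij.
  apply: (@perm_invariant_functional_rel_diag _ (fun a b => same I (inl a) (inr b))) sij.
  - by move=> s a b; apply: (invI s (inl a) (inr b)).
  - by rewrite card_ord.
  move=> a b c sab sac; apply: (inS_same_bot sI); apply: (same_trans hI _ sac).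
  by rewrite same_sym.
apply: columnar_eq_pone => // i j sij; apply: (inS_same_bot sI).
apply: (same_trans hI _ (cI j)); apply: (same_trans hI _ sij).
by rewrite same_sym.
Qed.

Lemma columnar_relabel_invariant J : 0 < n -> is_setpart J -> columnar J ->
  relabel_invariant J -> J = pone n \/ J = pfull.
Proof.
move=> n_gt0 hJ cJ invJ.
have [discrJ|fullJ] := @perm_invariant_rel_discrete_or_full _
  (fun a b => same J (inl a) (inl b)) (fun s a b => invJ s (inl a) (inl b))
  (fun i => same_refl (inl i) hJ).
  by left; apply: columnar_eq_pone.
by right; apply: setpart_full => // x y; rewrite columnar_same.
Qed.

Lemma inR_permp s : inR (permp s, permp s).
Proof.
split; last split; rewrite /=; first split.
- exact: permp_setpart.
- by move=> B /imsetP[i _ ->]; exists i, (s i).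
- exact: permp_setpart.
- by move=> B BP; exists [set B]; rewrite sub1set BP cover1.
Qed.

Lemma central_relabel_invariant I J : inR (I, J) ->
    (forall y : rmon n, inR y -> rmul (I, J) y = rmul y (I, J)) ->
  relabel_invariant I /\ relabel_invariant J.
Proof.
move=> [[hI _] [hJ _]] IJC; split=> s;
  have [/esym psI /esym psJ] := IJC _ (inR_permp s); exact: pmul_permp_comm_relabel.
Qed.

Lemma central_rmon_cases (x : rmon n) : 2 < n -> inR x ->
  (forall y : rmon n, inR y -> rmul x y = rmul y x) -> x = rone n \/ x = eprod n.
Proof.
case: x => I J n3 xR xC; have [/= sI [hJ IJ]] := xR.
have n_gt0 : 0 < n by apply: leq_trans n3.
have [invI invJ] := central_relabel_invariant xR xC.
have eI : I = pone n := inS_relabel_invariant_eq_pone n3 sI invI.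
have cJ : columnar J by move=> i; apply: (preceq_same sI.1 hJ IJ); rewrite eI columnar_pone.
rewrite eprodE // /rone eI.
by have [->|->] := columnar_relabel_invariant n_gt0 hJ cJ invJ; [left|right].
Qed.

Lemma rone_central (y : rmon n) : inR y -> rmul (rone n) y = rmul y (rone n).
Proof. by case: y => I J [[hI _] [hJ _]]; rewrite /rmul /= !pone_pmul ?pmul_pone. Qed.

Lemma pfull_central (y : rmon n) : 0 < n -> inR y ->
  rmul (pone n, pfull) y = rmul y (pone n, pfull).
Proof.
case: y => I J n_gt0 [sI [hJ IJ]]; have bJ := inS_balanced sI hJ IJ.
by rewrite /rmul /= pone_pmul ?pmul_pone ?pmul_pfull_l ?pmul_pfull_r //; case: sI.
Qed.

End PartitionMonoid.

Theorem proposition3p4 (n : nat) : 3 <= n ->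
  forall x : rmon n, inR x ->
    ((forall y : rmon n, inR y -> rmul x y = rmul y x) <->
     (x = rone n \/ x = eprod n)).
Proof.
move=> n3 x hx; split; first exact: central_rmon_cases.
have n_gt0 : 0 < n by apply: leq_trans n3.
by case=> -> y hy; [apply: rone_central | rewrite eprodE //; apply: pfull_central].
Qed.
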